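(* Let $0<\beta<1$, $T>0$, $n_T$ a positive integer, $\tau=T/n_T$ and $t_k=k\tau$. Let $\varrho_j$ be defined by $(1-z)^{-\beta}=\sum_{j=0}^\infty \varrho_j z^j$ and set $P_{j}:=\tau^{\beta}\varrho_{j}$. Then for any real $\mu>0$, $$\mu\sum_{j=0}^{k-1}P_{k-j}\,E_\beta(\mu t_j^{\beta})\le E_\beta(\mu t_k^{\beta})-1,\qquad 1\le k\le n_T,$$ where $E_\beta(z)=\sum_{l=0}^\infty \frac{z^l}{\Gamma(1+l\beta)}$ is the Mittag-Leffler function. *)

From Stdlib Require Import Reals.
From Coquelicot Require Import Coquelicot.
Open Scope R_scope.

(* Real power x^a for x >= 0 with the convention 0^a = 0 (a > 0 in all uses).
   (Stdlib's Rpower 0 a = 1, which is why we do not use it at 0.) *)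
Definition rpow (x a : R) : R := if Rle_dec x 0 then 0 else Rpower x a.

Definition Gamma (x : R) : R :=
  RInt_gen (fun t => Rpower t (x - 1) * exp (- t)) (at_right 0) (Rbar_locally p_infty).

Definition mittag_leffler (beta z : R) : R :=
  Series (fun l => z ^ l / Gamma (1 + INR l * beta)).

(* Coefficients of (1 - z)^(-beta) = sum_j rho_j z^j, i.e. the generalized
   binomial coefficients rho_j = (-1)^j binom(-beta, j)
   = prod_{i=0}^{j-1} (beta + i) / (i + 1). *)
Fixpoint rho (beta : R) (j : nat) : R :=
  match j with
  | O => 1
  | S i => rho beta i * ((beta + INR i) / INR (S i))
  end.

(* Expanding both Mittag-Leffler functions in powers of [x = mu tau^beta], the inequality follows
   termwise from
     sum_{j<k} rho_{k-j} j^(l beta) / Gamma(1 + l beta) <= k^((l+1) beta) / Gamma(1 + (l+1) beta).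
   Wendel's inequality [Gamma (x + s) <= x^s Gamma x] gives
   [rho_m <= (m^beta - (m-1)^beta) / Gamma (1 + beta)], which bounds the left-hand side by a lower
   Riemann-Stieltjes sum of [int_0^k (k - s)^beta d(s^a)] with [a = l beta].  After the substitution
   [s^a = k^a v] this integral is [k^(a+beta)] times [int_0^1 (1 - v^(1/a))^beta dv], a Beta integral
   bounded by [Gamma (1 + a) Gamma (1 + beta) / Gamma (1 + a + beta)] using only the recursion of
   the Beta integral in its second parameter and its decay as that parameter tends to infinity. *)

From Stdlib Require Import Reals Lra Lia Classical Factorial.
From Coquelicot Require Import Coquelicot.
Open Scope R_scope.

(** * Real powers *)

Lemma Rpower_pos x a : 0 < Rpower x a.
Proof. apply exp_pos. Qed.

Lemma Rpower_base_1 a : Rpower 1 a = 1.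
Proof. unfold Rpower. rewrite ln_1, Rmult_0_r. apply exp_0. Qed.

Lemma Rpower_exp x a : Rpower (exp x) a = exp (a * x).
Proof. unfold Rpower. rewrite ln_exp. reflexivity. Qed.

Lemma Rpower_minus_1 x s : 0 < x -> Rpower x (s - 1) = Rpower x s / x.
Proof.
  intros Hx. unfold Rpower. replace ((s - 1) * ln x) with (s * ln x + - ln x) by ring.
  rewrite exp_plus, exp_Ropp, exp_ln by lra. reflexivity.
Qed.

Lemma Rpower_plus_1 x s : 0 < x -> Rpower x (s + 1) = Rpower x s * x.
Proof. intros Hx. rewrite Rpower_plus, Rpower_1 by lra. reflexivity. Qed.

Lemma Rpower_div x y s : 0 < x -> 0 < y -> Rpower (x / y) s = Rpower x s / Rpower y s.
Proof.
  intros Hx Hy. unfold Rpower. rewrite ln_div by lra.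
  rewrite Rmult_minus_distr_l. unfold Rminus. rewrite exp_plus, exp_Ropp. reflexivity.
Qed.

Lemma Rpower_Rpower_Rinv x a : 0 < a -> 0 < x -> Rpower (Rpower x a) (/ a) = x.
Proof. intros Ha Hx. rewrite Rpower_mult, Rinv_r, Rpower_1 by lra. reflexivity. Qed.

Lemma Rpower_Rinv_Rpower x a : 0 < a -> 0 < x -> Rpower (Rpower x (/ a)) a = x.
Proof. intros Ha Hx. rewrite Rpower_mult, Rinv_l, Rpower_1 by lra. reflexivity. Qed.

Lemma Rpower_lt_1 x a : 0 < a -> 0 < x < 1 -> Rpower x a < 1.
Proof.
  intros Ha Hx. unfold Rpower. rewrite <- exp_0. apply exp_increasing.
  assert (ln x < 0) by (rewrite <- ln_1; apply ln_increasing; lra). nra.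
Qed.

Lemma Rpower_le_1 x a : 0 <= a -> 0 < x <= 1 -> Rpower x a <= 1.
Proof. intros Ha Hx. rewrite <- (Rpower_base_1 a). apply Rle_Rpower_l; lra. Qed.

Lemma exp_le_exp x y : x <= y -> exp x <= exp y.
Proof. intros [H|H]; [left; apply exp_increasing; exact H|subst; lra]. Qed.

Lemma exp_le_1 x : x <= 0 -> exp x <= 1.
Proof. intros H. rewrite <- exp_0. apply exp_le_exp, H. Qed.

Lemma exp_neg_le_inv y : 0 < y -> exp (- y) <= / y.
Proof.
  intros Hy. rewrite exp_Ropp. apply Rinv_le_contravar; [exact Hy|].
  pose proof (exp_ineq1_le y). lra.
Qed.

Lemma Rpower_continuous a x : 0 < x -> continuous (fun y => Rpower y a) x.
Proof.
  intros Hx. apply (@ex_derive_continuous R_AbsRing R_NormedModule).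
  unfold Rpower. auto_derive. lra.
Qed.

Lemma is_derive_Rpower s t : 0 < t -> is_derive (fun x => Rpower x s) t (s * Rpower t (s - 1)).
Proof.
  intros Ht. rewrite Rpower_minus_1 by lra. unfold Rpower.
  auto_derive; [lra|]. field. lra.
Qed.

Lemma Rpower_le_bernoulli s y : 0 <= s <= 1 -> 0 < y -> Rpower y s <= 1 + s * (y - 1).
Proof.
  intros Hs Hy.
  destruct (MVT_gen (fun t => Rpower t s) 1 y (fun t => s * Rpower t (s - 1))) as [c [Hc Heq]].
  - intros x [Hx _]. apply is_derive_Rpower.
    apply Rlt_trans with (2 := Hx). apply Rmin_glb_lt; lra.
  - intros x [Hx _]. apply continuity_pt_filterlim, Rpower_continuous.
    apply Rlt_le_trans with (2 := Hx). apply Rmin_glb_lt; lra.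
  - rewrite Rpower_base_1 in Heq.
    assert (Hc0 : 0 < c) by (apply Rlt_le_trans with (2 := proj1 Hc); apply Rmin_glb_lt; lra).
    set (E := Rpower c (s - 1)) in Heq.
    assert (HE : (y - 1) * (E - 1) <= 0).
    { destruct (Rlt_or_le y 1) as [Hy1|Hy1]; unfold E, Rpower.
      - rewrite Rmin_right, Rmax_left in Hc by lra.
        assert (ln c <= 0) by (rewrite <- ln_1; apply ln_le; lra).
        pose proof (exp_ineq1_le ((s - 1) * ln c)).
        assert (0 <= (s - 1) * ln c) by nra. nra.
      - rewrite Rmin_left, Rmax_right in Hc by lra.
        assert (0 <= ln c) by (rewrite <- ln_1; apply ln_le; lra).
        assert (exp ((s - 1) * ln c) <= 1) by (apply exp_le_1; nra). nra. }
    assert (0 <= s * - ((y - 1) * (E - 1))) by (apply Rmult_le_pos; lra).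
    nra.
Qed.

Lemma Rpower_le_tangent s x t : 0 <= s <= 1 -> 0 < x -> 0 < t ->
  Rpower t s <= (1 - s) * Rpower x s + s * Rpower x (s - 1) * t.
Proof.
  intros Hs Hx Ht.
  assert (Hy : 0 < t / x) by (apply Rdiv_lt_0_compat; lra).
  pose proof (Rpower_le_bernoulli s (t / x) Hs Hy) as B.
  pose proof (Rpower_pos x s) as Hxs.
  apply Rmult_le_compat_r with (r := Rpower x s) in B; [|lra].
  rewrite Rpower_mult_distr in B by lra.
  replace (t / x * x) with t in B by (field; lra).
  rewrite Rpower_minus_1 by lra.
  eapply Rle_trans; [exact B|]. right. field. lra.
Qed.

Lemma pow_le_fact_mul_exp n t : 0 <= t -> t ^ n <= INR (fact n) * exp t.
Proof.
  intros Ht. pose proof (INR_fact_lt_0 n) as Hf.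
  assert (Hterm : t ^ n / INR (fact n) <= exp t).
  { eapply Rle_trans; [|apply (exp_ge_taylor t n Ht)].
    destruct n as [|n]; [simpl; lra|]. rewrite tech5.
    assert (0 <= sum_f_R0 (fun k => t ^ k / INR (fact k)) n); [|lra].
    apply cond_pos_sum. intros k.
    apply Rdiv_le_0_compat; [apply pow_le; lra|apply INR_fact_lt_0]. }
  apply Rmult_le_compat_l with (r := INR (fact n)) in Hterm; [|lra].
  replace (INR (fact n) * (t ^ n / INR (fact n))) with (t ^ n) in Hterm by (field; lra).
  exact Hterm.
Qed.

Lemma Rpower_le_mul_exp_half x : 0 <= x ->
  exists C, 0 < C /\ forall t, 0 < t -> Rpower t x <= C * exp (t / 2).
Proof.
  intros Hx. destruct (INR_unbounded x) as [n Hn].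
  set (K := 2 ^ n * INR (fact n)).
  assert (HK : 0 < K) by (apply Rmult_lt_0_compat; [apply pow_lt; lra|apply INR_fact_lt_0]).
  exists (1 + K). split; [lra|]. intros t Ht.
  assert (He : 1 <= exp (t / 2)) by (pose proof (exp_ineq1_le (t / 2)); lra).
  destruct (Rle_or_lt t 1) as [Ht1|Ht1].
  - assert (Rpower t x <= 1) by (apply Rpower_le_1; lra). nra.
  - assert (Rpower t x <= t ^ n) by (rewrite <- Rpower_pow by lra; apply Rle_Rpower; lra).
    assert (t ^ n = 2 ^ n * (t / 2) ^ n) by (rewrite <- Rpow_mult_distr; f_equal; field).
    pose proof (pow_le_fact_mul_exp n (t / 2) ltac:(lra)).
    pose proof (pow_lt 2 n ltac:(lra)). unfold K. nra.
Qed.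

Lemma Rpower_mul_exp_neg_le x : 0 <= x ->
  exists C, 0 < C /\ forall t, 0 < t -> Rpower t x * exp (- t) <= C * exp (- t / 2).
Proof.
  intros Hx. destruct (Rpower_le_mul_exp_half x Hx) as [C [HC Hb]].
  exists C. split; [exact HC|]. intros t Ht.
  replace (C * exp (- t / 2)) with (C * exp (t / 2) * exp (- t)).
  - apply Rmult_le_compat_r; [left; apply exp_pos|apply Hb, Ht].
  - rewrite Rmult_assoc, <- exp_plus. do 2 f_equal. field.
Qed.

Lemma Rpower_mul_exp_neg_small x eps : 0 <= x -> 0 < eps ->
  exists M, 0 < M /\ forall t, M <= t -> Rpower t x * exp (- t) <= eps.
Proof.
  intros Hx Heps. destruct (Rpower_mul_exp_neg_le x Hx) as [C [HC Hb]].
  exists (2 * C / eps). split; [apply Rdiv_lt_0_compat; lra|]. intros t Ht.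
  assert (Ht0 : 0 < t) by (eapply Rlt_le_trans; [|exact Ht]; apply Rdiv_lt_0_compat; lra).
  eapply Rle_trans; [apply Hb, Ht0|].
  pose proof (exp_neg_le_inv (t / 2) ltac:(lra)) as E.
  replace (- (t / 2)) with (- t / 2) in E by field.
  apply Rle_trans with (C * / (t / 2)); [apply Rmult_le_compat_l; lra|].
  apply Rmult_le_compat_r with (r := eps / t) in Ht; [|apply Rdiv_le_0_compat; lra].
  replace (2 * C / eps * (eps / t)) with (C * / (t / 2)) in Ht by (field; lra).
  replace (t * (eps / t)) with eps in Ht by (field; lra). exact Ht.
Qed.

Lemma rpow_Rpower x a : 0 < x -> rpow x a = Rpower x a.
Proof. intros H; unfold rpow; destruct (Rle_dec x 0); [lra|reflexivity]. Qed.

Lemma rpow_nonpos x a : x <= 0 -> rpow x a = 0.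
Proof. intros H; unfold rpow; destruct (Rle_dec x 0); [reflexivity|lra]. Qed.

Lemma rpow_nonneg x a : 0 <= rpow x a.
Proof. unfold rpow; destruct (Rle_dec x 0); [lra|left; apply Rpower_pos]. Qed.

Lemma rpow_le_compat p x y : 0 < p -> x <= y -> rpow x p <= rpow y p.
Proof.
  intros Hp Hxy. destruct (Rle_or_lt x 0) as [Hx|Hx].
  - rewrite rpow_nonpos by lra. apply rpow_nonneg.
  - rewrite !rpow_Rpower by lra. apply Rle_Rpower_l; lra.
Qed.

Lemma rpow_le_1 x p : 0 < p -> x <= 1 -> rpow x p <= 1.
Proof. intros Hp Hx. rewrite <- (Rpower_base_1 p), <- rpow_Rpower by lra. apply rpow_le_compat; lra. Qed.

Lemma rpow_mult x y a : 0 <= x -> 0 <= y -> rpow (x * y) a = rpow x a * rpow y a.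
Proof.
  intros Hx Hy. destruct (Req_dec x 0) as [->|Hx0]; [rewrite Rmult_0_l, !rpow_nonpos by lra; ring|].
  destruct (Req_dec y 0) as [->|Hy0]; [rewrite Rmult_0_r, !(rpow_nonpos 0) by lra; ring|].
  rewrite !rpow_Rpower by nra. symmetry. apply Rpower_mult_distr; lra.
Qed.

Lemma rpow_pow x p n : (1 <= n)%nat -> rpow x p ^ n = rpow x (INR n * p).
Proof.
  intros Hn. destruct (Rle_or_lt x 0) as [Hx|Hx].
  - rewrite !rpow_nonpos by lra. destruct n; [lia|]. simpl. ring.
  - rewrite !rpow_Rpower by lra. rewrite <- Rpower_pow by apply Rpower_pos.
    rewrite Rpower_mult. f_equal. ring.
Qed.

Lemma rpow_rpow_Rinv x a : 0 < a -> 0 <= x -> rpow (rpow x a) (/ a) = x.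
Proof.
  intros Ha [Hx|<-].
  - rewrite (rpow_Rpower x a Hx), rpow_Rpower by apply Rpower_pos.
    apply Rpower_Rpower_Rinv; lra.
  - rewrite (rpow_nonpos 0 a), rpow_nonpos; lra.
Qed.

Lemma rpow_continuous a x : 0 < a -> continuous (fun y => rpow y a) x.
Proof.
  intros Ha. destruct (Rlt_or_le 0 x) as [Hx|[Hx| ->]].
  - apply continuous_ext_loc with (fun y => Rpower y a); [|apply Rpower_continuous, Hx].
    exists (mkposreal x Hx). intros y Hy. change (Rabs (y - x) < x) in Hy.
    apply Rabs_lt_between in Hy. symmetry. apply rpow_Rpower. lra.
  - apply continuous_ext_loc with (fun _ => 0); [|apply continuous_const].
    exists (mkposreal (- x) ltac:(lra)). intros y Hy. change (Rabs (y - x) < - x) in Hy.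
    apply Rabs_lt_between in Hy. symmetry. apply rpow_nonpos. lra.
  - apply filterlim_locally. intros eps. rewrite rpow_nonpos by lra.
    exists (mkposreal _ (Rpower_pos eps (/ a))). intros y Hy.
    change (Rabs (y - 0) < Rpower eps (/ a)) in Hy. change (Rabs (rpow y a - 0) < eps).
    rewrite Rminus_0_r in Hy |- *. rewrite Rabs_pos_eq by apply rpow_nonneg.
    destruct (Rle_or_lt y 0) as [Hy0|Hy0]; [rewrite rpow_nonpos by lra; apply cond_pos|].
    rewrite Rabs_pos_eq in Hy by lra. rewrite rpow_Rpower by lra.
    rewrite <- (Rpower_Rinv_Rpower eps a Ha (cond_pos eps)).
    apply Rlt_Rpower_l; lra.
Qed.

(** * Integrals on an interval *)

Lemma RInt_antiderivative (F f : R -> R) a b :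
  (forall t, Rmin a b <= t <= Rmax a b -> is_derive F t (f t)) ->
  (forall t, Rmin a b <= t <= Rmax a b -> continuous f t) ->
  RInt f a b = F b - F a.
Proof. intros HD HC. apply is_RInt_unique, (is_RInt_derive F f a b HD HC). Qed.

(* [t |-> RInt f a t - F t] has zero derivative on ]a, b[ and is continuous on [a, b]. *)
Lemma RInt_antiderivative_interior (F f : R -> R) a b : a < b ->
  (forall t, a < t < b -> is_derive F t (f t)) ->
  (forall t, continuous f t) -> continuous F a -> continuous F b ->
  RInt f a b = F b - F a.
Proof.
  intros Hab HD Hf HFa HFb.
  assert (Hex : forall u v, ex_RInt f u v)
    by (intros; apply (@ex_RInt_continuous R_CompleteNormedModule); intros; apply Hf).
  assert (HI : forall t, is_derive (RInt f a) t (f t)).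
  { intros t. apply (is_derive_RInt f (RInt f a) a t); [|apply Hf].
    apply filter_forall. intros u. apply (@RInt_correct R_CompleteNormedModule), Hex. }
  destruct (MVT_gen (fun t => RInt f a t - F t) a b (fun _ => 0)) as [c [_ Hc]].
  - rewrite Rmin_left, Rmax_right by lra. intros t Ht.
    replace 0 with (f t - f t) by ring. apply (is_derive_minus (RInt f a) F), HD; auto.
  - rewrite Rmin_left, Rmax_right by lra. intros t Ht.
    apply continuity_pt_filterlim, (@continuous_minus R_UniformSpace R_AbsRing R_NormedModule).
    + apply (ex_derive_continuous (RInt f a)). eexists. apply HI.
    + destruct (Req_dec t a) as [->|Hta]; [exact HFa|].
      destruct (Req_dec t b) as [->|Htb]; [exact HFb|].
      apply (ex_derive_continuous F). eexists. apply HD. lra.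
  - rewrite RInt_point in Hc. change zero with 0 in Hc. lra.
Qed.

Lemma ex_RInt_lin (f g : R -> R) c d a b : ex_RInt f a b -> ex_RInt g a b ->
  ex_RInt (fun t => c * f t + d * g t) a b.
Proof.
  intros Hf Hg. apply (ex_RInt_plus (fun t => c * f t));
    [apply (ex_RInt_scal f)|apply (ex_RInt_scal g)]; assumption.
Qed.

Lemma RInt_lin (f g : R -> R) c d a b : ex_RInt f a b -> ex_RInt g a b ->
  RInt (fun t => c * f t + d * g t) a b = c * RInt f a b + d * RInt g a b.
Proof.
  intros Hf Hg. apply is_RInt_unique.
  apply (is_RInt_plus (fun t => c * f t));
    [apply (is_RInt_scal f)|apply (is_RInt_scal g)];
    apply (@RInt_correct R_CompleteNormedModule); assumption.
Qed.

Lemma RInt_mult_l (f : R -> R) k a b : ex_RInt f a b -> RInt (fun t => k * f t) a b = k * RInt f a b.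
Proof.
  intros Hf. apply is_RInt_unique, (is_RInt_scal f).
  apply (@RInt_correct R_CompleteNormedModule), Hf.
Qed.

Lemma RInt_const_mult (c a b : R) : RInt (fun _ => c) a b = (b - a) * c.
Proof. rewrite RInt_const. reflexivity. Qed.

(** * The Gamma function *)

Definition gamma_kernel (x t : R) : R := Rpower t (x - 1) * exp (- t).

Lemma gamma_kernel_pos x t : 0 < gamma_kernel x t.
Proof. apply Rmult_lt_0_compat; [apply Rpower_pos|apply exp_pos]. Qed.

Lemma gamma_kernel_continuous x t : 0 < t -> continuous (gamma_kernel x) t.
Proof.
  intros Ht. apply (@ex_derive_continuous R_AbsRing R_NormedModule).
  unfold gamma_kernel, Rpower. auto_derive. lra.
Qed.

Lemma ex_RInt_gamma_kernel x e T : 0 < e -> 0 < T -> ex_RInt (gamma_kernel x) e T.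
Proof.
  intros He HT. apply (@ex_RInt_continuous R_CompleteNormedModule). intros z [Hz _].
  apply gamma_kernel_continuous. apply Rlt_le_trans with (2 := Hz). apply Rmin_glb_lt; lra.
Qed.

Lemma RInt_gamma_kernel_nonneg x e T : 0 < e <= T -> 0 <= RInt (gamma_kernel x) e T.
Proof.
  intros HeT. apply RInt_ge_0; [lra|apply ex_RInt_gamma_kernel; lra|].
  intros t _. left. apply gamma_kernel_pos.
Qed.

Lemma RInt_gamma_kernel_widen x e' e T T' : 0 < e' <= e -> e <= T -> T <= T' ->
  RInt (gamma_kernel x) e T <= RInt (gamma_kernel x) e' T'.
Proof.
  intros He HeT HT.
  rewrite <- (RInt_Chasles (gamma_kernel x) e' e T') by (apply ex_RInt_gamma_kernel; lra).
  rewrite <- (RInt_Chasles (gamma_kernel x) e T T') by (apply ex_RInt_gamma_kernel; lra).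
  pose proof (RInt_gamma_kernel_nonneg x e' e ltac:(lra)).
  pose proof (RInt_gamma_kernel_nonneg x T T' ltac:(lra)).
  change plus with Rplus. lra.
Qed.

Lemma RInt_gamma_kernel_bounded x : 1 <= x ->
  exists M, forall e T, 0 < e < T -> RInt (gamma_kernel x) e T <= M.
Proof.
  intros Hx. destruct (Rpower_mul_exp_neg_le (x - 1) ltac:(lra)) as [C [HC Hb]].
  exists (2 * C). intros e T HeT.
  assert (HF : RInt (fun t => C * exp (- t / 2)) e T
               = - 2 * C * exp (- T / 2) - - 2 * C * exp (- e / 2)).
  { apply (RInt_antiderivative (fun t => - 2 * C * exp (- t / 2))); intros t _.
    - auto_derive; [auto|]. replace (- t / 2) with (- t * / 2) by field. field.
    - apply (@ex_derive_continuous R_AbsRing R_NormedModule). auto_derive. auto. }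
  apply Rle_trans with (RInt (fun t => C * exp (- t / 2)) e T).
  - apply RInt_le; [lra|apply ex_RInt_gamma_kernel; lra| |].
    + apply (@ex_RInt_continuous R_CompleteNormedModule). intros z _.
      apply (@ex_derive_continuous R_AbsRing R_NormedModule). auto_derive. auto.
    + intros t Ht. apply Hb. lra.
  - rewrite HF. pose proof (exp_pos (- T / 2)). pose proof (exp_le_1 (- e / 2) ltac:(lra)). nra.
Qed.

Definition gamma_truncations (x v : R) : Prop :=
  exists e T, 0 < e < T /\ v = RInt (gamma_kernel x) e T.

(* The truncated integrals increase with the interval, so the improper integral [Gamma x] is
   their supremum. *)
Lemma Gamma_is_lub x : 1 <= x -> is_lub (gamma_truncations x) (Gamma x).
Proof.
  intros Hx.
  assert (Hb : bound (gamma_truncations x)).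
  { destruct (RInt_gamma_kernel_bounded x Hx) as [M HM]. exists M. intros v [e [T [HeT ->]]]. auto. }
  assert (Hne : exists v, gamma_truncations x v)
    by (exists (RInt (gamma_kernel x) 1 2), 1, 2; split; [lra|reflexivity]).
  destruct (completeness _ Hb Hne) as [m [Hub Hleast]].
  replace (Gamma x) with m; [split; assumption|].
  symmetry. apply is_RInt_gen_unique. intros P [eps Heps].
  assert (Hex : exists e0 T0, 0 < e0 < T0 /\ m - eps < RInt (gamma_kernel x) e0 T0).
  { apply NNPP. intros Hn. pose proof (cond_pos eps).
    assert (m <= m - eps); [|lra].
    apply Hleast. intros v [e [T [HeT ->]]]. apply Rnot_lt_le. intros Hlt.
    apply Hn. exists e, T. auto. }
  destruct Hex as [e0 [T0 [HeT0 Hlow]]].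
  apply Filter_prod with (Q := fun a => 0 < a < e0) (R := fun b => T0 < b).
  - exists (mkposreal e0 ltac:(lra)). intros a Ha Hpos. change (Rabs (a - 0) < e0) in Ha.
    apply Rabs_lt_between in Ha. lra.
  - exists T0. auto.
  - intros a b Ha Hb'. exists (RInt (gamma_kernel x) a b). split.
    + apply (@RInt_correct R_CompleteNormedModule). apply ex_RInt_gamma_kernel; lra.
    + apply Heps. change (Rabs (RInt (gamma_kernel x) a b - m) < eps).
      assert (RInt (gamma_kernel x) a b <= m) by (apply Hub; exists a, b; split; [lra|reflexivity]).
      assert (RInt (gamma_kernel x) e0 T0 <= RInt (gamma_kernel x) a b)
        by (apply RInt_gamma_kernel_widen; lra).
      apply Rabs_lt_between. lra.
Qed.

Lemma RInt_gamma_kernel_le_Gamma x e T : 1 <= x -> 0 < e < T -> RInt (gamma_kernel x) e T <= Gamma x.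
Proof. intros Hx HeT. apply (Gamma_is_lub x Hx). exists e, T. auto. Qed.

Lemma Gamma_le x M : 1 <= x -> (forall e T, 0 < e < T -> RInt (gamma_kernel x) e T <= M) -> Gamma x <= M.
Proof. intros Hx H. apply (Gamma_is_lub x Hx). intros v [e [T [HeT ->]]]. auto. Qed.

Lemma Gamma_pos x : 1 <= x -> 0 < Gamma x.
Proof.
  intros Hx. apply Rlt_le_trans with (RInt (gamma_kernel x) 1 2); [|apply RInt_gamma_kernel_le_Gamma; lra].
  apply RInt_gt_0; [lra|intros; apply gamma_kernel_pos|].
  intros t Ht. apply gamma_kernel_continuous. lra.
Qed.

Lemma RInt_gamma_kernel_succ x e T : 0 < e -> 0 < T ->
  RInt (gamma_kernel (x + 1)) e T
  = x * RInt (gamma_kernel x) e T + (Rpower e x * exp (- e) - Rpower T x * exp (- T)).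
Proof.
  intros He HT.
  assert (Hpos : forall t, Rmin e T <= t -> 0 < t)
    by (intros t Ht; apply Rlt_le_trans with (2 := Ht); apply Rmin_glb_lt; lra).
  assert (HI : RInt (fun t => 1 * gamma_kernel (x + 1) t + - x * gamma_kernel x t) e T
               = - Rpower T x * exp (- T) - - Rpower e x * exp (- e)).
  { apply (RInt_antiderivative (fun t => - Rpower t x * exp (- t))); intros t [Ht _];
      specialize (Hpos t Ht).
    - unfold gamma_kernel. replace (x + 1 - 1) with x by ring. rewrite Rpower_minus_1 by lra.
      unfold Rpower. auto_derive; [lra|]. field. lra.
    - apply (@ex_derive_continuous R_AbsRing R_NormedModule).
      unfold gamma_kernel, Rpower. auto_derive. lra. }
  rewrite RInt_lin in HI by (apply ex_RInt_gamma_kernel; lra). lra.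
Qed.

Lemma RInt_gamma_kernel_1 e T : 0 < e -> 0 < T -> RInt (gamma_kernel 1) e T = exp (- e) - exp (- T).
Proof.
  intros He HT. pose proof (RInt_gamma_kernel_succ 0 e T He HT) as H.
  rewrite Rplus_0_l, Rmult_0_l, Rplus_0_l, !Rpower_O in H by lra. rewrite H. lra.
Qed.

Lemma Gamma_1 : Gamma 1 = 1.
Proof.
  apply Rle_antisym.
  - apply Gamma_le; [lra|]. intros e T HeT. rewrite RInt_gamma_kernel_1 by lra.
    pose proof (exp_pos (- T)). pose proof (exp_le_1 (- e) ltac:(lra)). lra.
  - apply Rle_plus_epsilon. intros eps Heps.
    set (e := Rmin (eps / 2) (1 / 2)). set (T := 2 / eps + 1).
    assert (He : 0 < e <= eps / 2) by (split; [apply Rmin_glb_lt|apply Rmin_l]; lra).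
    assert (He1 : e <= 1 / 2) by apply Rmin_r.
    assert (HT0 : 0 < 2 / eps) by (apply Rdiv_lt_0_compat; lra).
    assert (HT : 2 / eps < T /\ 1 < T) by (unfold T; lra).
    pose proof (RInt_gamma_kernel_le_Gamma 1 e T ltac:(lra) ltac:(lra)) as G.
    rewrite RInt_gamma_kernel_1 in G by lra.
    pose proof (exp_ineq1_le (- e)).
    assert (exp (- T) <= eps / 2).
    { eapply Rle_trans; [apply exp_neg_le_inv; lra|].
      replace (eps / 2) with (/ (2 / eps)) by (field; lra).
      apply Rinv_le_contravar; lra. }
    lra.
Qed.

Lemma Gamma_succ_le x : 1 <= x -> Gamma (x + 1) <= x * Gamma x.
Proof.
  intros Hx. apply Gamma_le; [lra|]. intros e T HeT. apply Rle_plus_epsilon. intros eta Heta.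
  set (e' := Rmin e (Rmin eta (1 / 2))).
  assert (He0 : 0 < e') by (unfold e'; repeat apply Rmin_glb_lt; lra).
  assert (He1 : e' <= e) by apply Rmin_l.
  assert (He2 : e' <= eta) by (eapply Rle_trans; [apply Rmin_r|apply Rmin_l]).
  assert (He3 : e' <= 1 / 2) by (eapply Rle_trans; [apply Rmin_r|apply Rmin_r]).
  apply Rle_trans with (RInt (gamma_kernel (x + 1)) e' T); [apply RInt_gamma_kernel_widen; lra|].
  rewrite RInt_gamma_kernel_succ by lra.
  pose proof (RInt_gamma_kernel_le_Gamma x e' T Hx ltac:(lra)).
  assert (Rpower e' x <= e').
  { rewrite <- (Rpower_1 e') at 2 by lra. unfold Rpower. apply exp_le_exp.
    assert (ln e' < 0) by (rewrite <- ln_1; apply ln_increasing; lra). nra. }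
  pose proof (exp_le_1 (- e') ltac:(lra)). pose proof (Rpower_pos e' x).
  assert (0 <= Rpower T x * exp (- T)) by (left; apply Rmult_lt_0_compat; [apply Rpower_pos|apply exp_pos]).
  nra.
Qed.

Lemma Gamma_succ_ge x : 1 <= x -> x * Gamma x <= Gamma (x + 1).
Proof.
  intros Hx. rewrite Rmult_comm. apply Rle_div_r; [lra|].
  apply Gamma_le; [lra|]. intros e T HeT. apply Rle_plus_epsilon. intros eta Heta.
  destruct (Rpower_mul_exp_neg_small x (x * eta) ltac:(lra) ltac:(nra)) as [M [HM HMb]].
  set (T' := Rmax (T + 1) M).
  assert (HT' : T + 1 <= T' /\ M <= T') by (split; [apply Rmax_l|apply Rmax_r]).
  apply Rle_trans with (RInt (gamma_kernel x) e T'); [apply RInt_gamma_kernel_widen; lra|].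
  pose proof (RInt_gamma_kernel_succ x e T' ltac:(lra) ltac:(lra)).
  pose proof (RInt_gamma_kernel_le_Gamma (x + 1) e T' ltac:(lra) ltac:(lra)).
  pose proof (HMb T' (proj2 HT')).
  assert (0 <= Rpower e x * exp (- e)) by (left; apply Rmult_lt_0_compat; [apply Rpower_pos|apply exp_pos]).
  apply Rmult_le_reg_l with x; [lra|].
  replace (x * (Gamma (x + 1) / x + eta)) with (Gamma (x + 1) + x * eta) by (field; lra).
  lra.
Qed.

Lemma Gamma_succ x : 1 <= x -> Gamma (x + 1) = x * Gamma x.
Proof. intros Hx. apply Rle_antisym; [apply Gamma_succ_le|apply Gamma_succ_ge]; exact Hx. Qed.

Lemma Gamma_INR_S n : Gamma (INR (S n)) = INR (fact n).
Proof.
  induction n as [|n IH]; [apply Gamma_1|].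
  rewrite S_INR, Gamma_succ by (apply (le_INR 1); lia).
  rewrite IH, fact_simpl, mult_INR, S_INR. ring.
Qed.

(* Wendel's inequality: integrate [t ^ s <= (1 - s) x ^ s + s x ^ (s - 1) t] against
   [t ^ (x - 1) e ^ (- t)]. *)
Lemma Gamma_plus_le x s : 1 <= x -> 0 <= s <= 1 -> Gamma (x + s) <= Rpower x s * Gamma x.
Proof.
  intros Hx Hs. apply Gamma_le; [lra|]. intros e T HeT.
  set (c1 := (1 - s) * Rpower x s). set (c2 := s * Rpower x (s - 1)).
  assert (Hc : 0 <= c1 /\ 0 <= c2).
  { pose proof (Rpower_pos x s). pose proof (Rpower_pos x (s - 1)). unfold c1, c2. split; nra. }
  apply Rle_trans with (RInt (fun t => c1 * gamma_kernel x t + c2 * gamma_kernel (x + 1) t) e T).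
  - apply RInt_le; [lra|apply ex_RInt_gamma_kernel; lra|apply ex_RInt_lin; apply ex_RInt_gamma_kernel; lra|].
    intros t Ht. unfold gamma_kernel. replace (x + s - 1) with (s + (x - 1)) by ring.
    replace (x + 1 - 1) with (1 + (x - 1)) by ring. rewrite !Rpower_plus, Rpower_1 by lra.
    pose proof (Rpower_le_tangent s x t Hs ltac:(lra) ltac:(lra)).
    pose proof (gamma_kernel_pos x t). unfold gamma_kernel in *. unfold c1, c2. nra.
  - rewrite RInt_lin by (apply ex_RInt_gamma_kernel; lra).
    pose proof (RInt_gamma_kernel_le_Gamma x e T Hx HeT).
    pose proof (RInt_gamma_kernel_le_Gamma (x + 1) e T ltac:(lra) HeT).
    rewrite Gamma_succ in * by lra.
    apply Rle_trans with (c1 * Gamma x + c2 * (x * Gamma x)); [nra|].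
    right. unfold c1, c2. rewrite Rpower_minus_1 by lra. field. lra.
Qed.

Lemma Gamma_plus_ge x s : 1 <= x -> 0 <= s <= 1 -> x * Gamma x <= Rpower (x + s) (1 - s) * Gamma (x + s).
Proof.
  intros Hx Hs. rewrite <- Gamma_succ by lra.
  replace (x + 1) with (x + s + (1 - s)) by ring. apply Gamma_plus_le; lra.
Qed.

Lemma Gamma_plus_le_pow y a : 1 <= y -> 0 <= a -> Gamma (y + a) <= Rpower (y + a) a * Gamma y.
Proof.
  intros Hy Ha. destruct (INR_unbounded a) as [n Hn].
  revert a Ha Hn. induction n as [|n IH]; intros a Ha Hn.
  - simpl in Hn. lra.
  - pose proof (Gamma_pos y Hy) as HG.
    destruct (Rle_or_lt a 1) as [Ha1|Ha1].
    + eapply Rle_trans; [apply Gamma_plus_le; lra|].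
      apply Rmult_le_compat_r; [lra|]. apply Rle_Rpower_l; lra.
    + rewrite S_INR in Hn.
      replace (y + a) with (y + (a - 1) + 1) by ring.
      rewrite Gamma_succ by lra.
      pose proof (IH (a - 1) ltac:(lra) ltac:(lra)) as H.
      replace (y + (a - 1) + 1) with (y + a) by ring.
      apply Rle_trans with ((y + (a - 1)) * (Rpower (y + (a - 1)) (a - 1) * Gamma y));
        [apply Rmult_le_compat_l; lra|].
      replace ((y + (a - 1)) * (Rpower (y + (a - 1)) (a - 1) * Gamma y))
        with (Rpower (y + (a - 1)) (a - 1 + 1) * Gamma y) by (rewrite Rpower_plus_1 by lra; ring).
      replace (a - 1 + 1) with a by ring.
      apply Rmult_le_compat_r; [lra|]. apply Rle_Rpower_l; lra.
Qed.

(** * The coefficients [rho] *)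

Lemma rpow_minus_1_le x b : 1 <= x -> 0 <= b <= 1 ->
  rpow (x - 1) b <= Rpower x b - b * Rpower x (b - 1).
Proof.
  intros Hx Hb. rewrite Rpower_minus_1 by lra.
  destruct (Req_dec x 1) as [->|Hx1].
  - rewrite Rminus_diag, rpow_nonpos, Rpower_base_1 by lra. lra.
  - rewrite rpow_Rpower by lra.
    pose proof (Rpower_le_bernoulli b ((x - 1) / x) Hb ltac:(apply Rdiv_lt_0_compat; lra)) as B.
    pose proof (Rpower_pos x b) as Hxb.
    apply Rmult_le_compat_r with (r := Rpower x b) in B; [|lra].
    rewrite Rpower_mult_distr in B by (try apply Rdiv_lt_0_compat; lra).
    replace ((x - 1) / x * x) with (x - 1) in B by (field; lra).
    eapply Rle_trans; [exact B|]. right. field. lra.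
Qed.

Lemma rho_nonneg b j : 0 < b -> 0 <= rho b j.
Proof.
  intros Hb. induction j as [|j IH]; [simpl; lra|].
  change (rho b (S j)) with (rho b j * ((b + INR j) / INR (S j))).
  apply Rmult_le_pos; [exact IH|].
  apply Rdiv_le_0_compat; [pose proof (pos_INR j); lra|apply lt_0_INR; lia].
Qed.

Lemma rho_Gamma b n : 0 < b ->
  rho b (S n) * Gamma (1 + b) * INR (fact (S n)) = b * Gamma (INR (S n) + b).
Proof.
  intros Hb. induction n as [|n IH].
  - simpl. replace (1 + b) with (b + 1) by ring. field.
  - change (rho b (S (S n))) with (rho b (S n) * ((b + INR (S n)) / INR (S (S n)))).
    rewrite (fact_simpl (S n)), mult_INR, (S_INR (S n)).
    replace (INR (S n) + 1 + b) with (INR (S n) + b + 1) by ring.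
    rewrite Gamma_succ by (rewrite S_INR; pose proof (pos_INR n); lra).
    replace (b * ((INR (S n) + b) * Gamma (INR (S n) + b)))
      with ((INR (S n) + b) * (b * Gamma (INR (S n) + b))) by ring.
    rewrite <- IH. field. pose proof (pos_INR (S n)). lra.
Qed.

Lemma rho_le_Rpower b m : 0 < b <= 1 -> (1 <= m)%nat ->
  rho b m * Gamma (1 + b) <= b * Rpower (INR m) (b - 1).
Proof.
  intros Hb Hm. destruct m as [|n]; [lia|].
  assert (Hm1 : 1 <= INR (S n)) by (apply (le_INR 1); lia).
  pose proof (INR_fact_lt_0 n) as Hf.
  assert (Hfact : INR (fact (S n)) = INR (S n) * INR (fact n)) by (rewrite fact_simpl, mult_INR; reflexivity).
  assert (Hpos : 0 < INR (fact (S n))) by apply INR_fact_lt_0.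
  apply Rmult_le_reg_r with (INR (fact (S n))); [exact Hpos|].
  rewrite rho_Gamma by lra.
  pose proof (Gamma_plus_le (INR (S n)) b Hm1 ltac:(lra)) as W.
  rewrite Gamma_INR_S in W.
  rewrite Rpower_minus_1, Hfact by lra.
  replace (b * (Rpower (INR (S n)) b / INR (S n)) * (INR (S n) * INR (fact n)))
    with (b * (Rpower (INR (S n)) b * INR (fact n))) by (field; lra).
  apply Rmult_le_compat_l; lra.
Qed.

Lemma rho_le_increment b m : 0 < b <= 1 -> (1 <= m)%nat ->
  rho b m <= (rpow (INR m) b - rpow (INR m - 1) b) / Gamma (1 + b).
Proof.
  intros Hb Hm.
  assert (Hm1 : 1 <= INR m) by (apply (le_INR 1); lia).
  pose proof (Gamma_pos (1 + b) ltac:(lra)) as HG.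
  apply Rmult_le_reg_r with (Gamma (1 + b)); [exact HG|].
  replace ((rpow (INR m) b - rpow (INR m - 1) b) / Gamma (1 + b) * Gamma (1 + b))
    with (rpow (INR m) b - rpow (INR m - 1) b) by (field; lra).
  eapply Rle_trans; [apply rho_le_Rpower; assumption|].
  rewrite rpow_Rpower by lra. pose proof (rpow_minus_1_le (INR m) b Hm1 ltac:(lra)). lra.
Qed.

(** * A Beta integral *)

(* Substituting [v = u ^ a] shows
   [beta_integral a c = Gamma (1 + a) Gamma (1 + c) / Gamma (1 + a + c)]; only the upper bound is
   needed, and it is obtained from the recursion in [c] and the behaviour as [c -> +oo]. *)
Definition beta_kernel (a c v : R) : R := rpow (1 - rpow v (/ a)) c.

Definition beta_integral (a c : R) : R := RInt (beta_kernel a c) 0 1.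

Lemma beta_kernel_continuous a c v : 0 < a -> 0 < c -> continuous (beta_kernel a c) v.
Proof.
  intros Ha Hc. unfold beta_kernel.
  apply (continuous_comp (fun v => 1 - rpow v (/ a)) (fun w => rpow w c)); [|apply rpow_continuous, Hc].
  apply (@continuous_minus R_UniformSpace R_AbsRing R_NormedModule);
    [apply continuous_const|apply rpow_continuous, Rinv_0_lt_compat, Ha].
Qed.

Lemma ex_RInt_beta_kernel a c u v : 0 < a -> 0 < c -> ex_RInt (beta_kernel a c) u v.
Proof.
  intros Ha Hc. apply (@ex_RInt_continuous R_CompleteNormedModule).
  intros; apply beta_kernel_continuous; assumption.
Qed.

Lemma beta_kernel_bounds a c v : 0 < a -> 0 < c -> 0 <= v <= 1 -> 0 <= beta_kernel a c v <= 1.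
Proof.
  intros Ha Hc Hv. unfold beta_kernel. split; [apply rpow_nonneg|].
  apply rpow_le_1; [exact Hc|]. pose proof (rpow_nonneg v (/ a)). lra.
Qed.

Lemma beta_integral_nonneg a c : 0 < a -> 0 < c -> 0 <= beta_integral a c.
Proof.
  intros Ha Hc. apply RInt_ge_0; [lra|apply ex_RInt_beta_kernel; assumption|].
  intros v Hv. apply beta_kernel_bounds; lra.
Qed.

Lemma is_derive_beta_primitive a c v : 0 < a -> 0 < c -> 0 < v < 1 ->
  is_derive (fun v => v * Rpower (1 - Rpower v (/ a)) (c + 1)) v
    ((1 + (c + 1) / a) * Rpower (1 - Rpower v (/ a)) (c + 1)
     - (c + 1) / a * Rpower (1 - Rpower v (/ a)) c).
Proof.
  intros Ha Hc Hv.
  assert (Hu : Rpower v (/ a) < 1) by (apply Rpower_lt_1; [apply Rinv_0_lt_compat|]; lra).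
  pose proof (Rpower_pos v (/ a)) as Hu0.
  unfold Rpower in *. auto_derive; [repeat split; lra|].
  set (u := exp (/ a * ln v)) in *.
  replace (1 + - u) with (1 - u) by ring.
  replace ((c + 1) * ln (1 - u)) with (c * ln (1 - u) + ln (1 - u)) by ring.
  rewrite exp_plus, exp_ln by lra. field. lra.
Qed.

(* Integration by parts of [beta_kernel a (c + 1)] against [dv]; the boundary terms vanish. *)
Lemma beta_integral_succ a c : 0 < a -> 0 < c ->
  (a + c + 1) * beta_integral a (c + 1) = (c + 1) * beta_integral a c.
Proof.
  intros Ha Hc.
  set (k := (c + 1) / a).
  assert (Hk : 0 < k) by (apply Rdiv_lt_0_compat; lra).
  set (F := fun v => v * rpow (1 - rpow v (/ a)) (c + 1)).
  assert (HF : forall v, continuous F v).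
  { intros v. apply (@continuous_mult R_UniformSpace R_AbsRing); [apply continuous_id|].
    apply (beta_kernel_continuous a (c + 1)); lra. }
  assert (H0 : RInt (fun v => (1 + k) * beta_kernel a (c + 1) v + - k * beta_kernel a c v) 0 1 = F 1 - F 0).
  { apply RInt_antiderivative_interior; [lra| |intros v|apply HF|apply HF].
    - intros v Hv. apply is_derive_ext_loc with (fun v => v * Rpower (1 - Rpower v (/ a)) (c + 1)).
      + exists (mkposreal (Rmin v (1 - v)) ltac:(apply Rmin_glb_lt; lra)).
        intros y Hy. change (Rabs (y - v) < Rmin v (1 - v)) in Hy.
        pose proof (Rmin_l v (1 - v)). pose proof (Rmin_r v (1 - v)).
        apply Rabs_lt_between in Hy. unfold F.
        assert (Rpower y (/ a) < 1) by (apply Rpower_lt_1; [apply Rinv_0_lt_compat|]; lra).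
        rewrite (rpow_Rpower y), rpow_Rpower by lra. reflexivity.
      + assert (Rpower v (/ a) < 1) by (apply Rpower_lt_1; [apply Rinv_0_lt_compat|]; lra).
        unfold beta_kernel. rewrite !(rpow_Rpower v), !rpow_Rpower by lra.
        replace (- k * Rpower (1 - Rpower v (/ a)) c) with (- (k * Rpower (1 - Rpower v (/ a)) c)) by ring.
        apply is_derive_beta_primitive; lra.
    - apply (@continuous_plus R_UniformSpace R_AbsRing R_NormedModule);
        apply (@continuous_mult R_UniformSpace R_AbsRing); try apply continuous_const;
        apply beta_kernel_continuous; lra. }
  assert (HF0 : F 0 = 0) by (unfold F; ring).
  assert (HF1 : F 1 = 0) by (unfold F; rewrite (rpow_Rpower 1), Rpower_base_1, Rminus_diag, rpow_nonpos; lra).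
  rewrite RInt_lin, HF0, HF1 in H0 by (apply ex_RInt_beta_kernel; lra).
  unfold beta_integral, k in *.
  apply Rmult_eq_reg_r with (/ a); [|apply Rinv_neq_0_compat; lra].
  replace ((a + c + 1) * RInt (beta_kernel a (c + 1)) 0 1 * / a)
    with ((1 + (c + 1) / a) * RInt (beta_kernel a (c + 1)) 0 1) by (field; lra).
  replace ((c + 1) * RInt (beta_kernel a c) 0 1 * / a) with ((c + 1) / a * RInt (beta_kernel a c) 0 1)
    by (field; lra).
  lra.
Qed.

Lemma beta_kernel_le_exp a c v : 0 < a -> 0 <= c -> 0 < v < 1 ->
  beta_kernel a c v <= exp (- c * rpow v (/ a)).
Proof.
  intros Ha Hc Hv. unfold beta_kernel. rewrite (rpow_Rpower v) by lra.
  assert (Hu : Rpower v (/ a) < 1) by (apply Rpower_lt_1; [apply Rinv_0_lt_compat|]; lra).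
  pose proof (Rpower_pos v (/ a)).
  rewrite rpow_Rpower by lra. unfold Rpower at 1. apply exp_le_exp.
  pose proof (exp_ineq1_le (ln (1 - Rpower v (/ a)))) as Hln. rewrite exp_ln in Hln by lra.
  nra.
Qed.

Lemma RInt_exp_rpow_change_var a c p : 0 < a -> 0 < c -> 0 < p ->
  RInt (fun v => exp (- c * rpow v (/ a))) (Rpower p a) 1
  = Rpower c (- a) * (a * RInt (gamma_kernel a) (c * p) c).
Proof.
  intros Ha Hc Hp.
  set (f := fun v => exp (- c * rpow v (/ a))).
  set (g := fun y => Rpower (y / c) a).
  set (dg := fun y => a / c * Rpower (y / c) (a - 1)).
  assert (Hpos : forall y, Rmin (c * p) c <= y -> 0 < y)
    by (intros y Hy; eapply Rlt_le_trans; [|exact Hy]; apply Rmin_glb_lt; nra).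
  assert (Hg : g (c * p) = Rpower p a /\ g c = 1).
  { unfold g. split; [do 2 f_equal; field; lra|].
    replace (c / c) with 1 by (field; lra). apply Rpower_base_1. }
  rewrite <- (proj1 Hg), <- (proj2 Hg).
  rewrite <- (RInt_comp f g dg).
  - assert (Hex : ex_RInt (gamma_kernel a) (c * p) c) by (apply ex_RInt_gamma_kernel; nra).
    rewrite <- (RInt_mult_l _ a _ _ Hex), <- RInt_mult_l by (apply (ex_RInt_scal (gamma_kernel a)), Hex).
    apply RInt_ext. intros y [Hy _]. specialize (Hpos y (Rlt_le _ _ Hy)).
    unfold f, g, dg, gamma_kernel. change scal with Rmult.
    rewrite rpow_Rpower by apply Rpower_pos.
    rewrite Rpower_mult, Rinv_r, Rpower_1 by (try apply Rdiv_lt_0_compat; lra).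
    replace (- c * (y / c)) with (- y) by (field; lra).
    rewrite Rpower_div, Rpower_minus_1, (Rpower_minus_1 c), Rpower_Ropp by lra.
    match goal with |- ?l = ?r => change (@eq R l r) end.
    field. repeat split; apply Rgt_not_eq; try apply Rpower_pos; lra.
  - intros y _. unfold f. apply (continuous_comp (fun v => - c * rpow v (/ a)) exp).
    + apply (@continuous_mult R_UniformSpace R_AbsRing); [apply continuous_const|].
      apply rpow_continuous, Rinv_0_lt_compat, Ha.
    + apply (@ex_derive_continuous R_AbsRing R_NormedModule). auto_derive. auto.
  - intros y [Hy _]. specialize (Hpos y Hy). split.
    + unfold g, dg. rewrite Rpower_minus_1 by (apply Rdiv_lt_0_compat; lra).
      unfold Rpower. auto_derive; [apply Rdiv_lt_0_compat; lra|]. unfold Rdiv.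
      field. split; apply Rgt_not_eq; lra.
    + apply (@ex_derive_continuous R_AbsRing R_NormedModule). unfold dg, Rpower. auto_derive.
      apply Rdiv_lt_0_compat; lra.
Qed.

Lemma mul_RInt_gamma_kernel_le a e T : 0 <= a -> 0 < e < T ->
  a * RInt (gamma_kernel a) e T <= Gamma (1 + a) + Rpower T a * exp (- T).
Proof.
  intros Ha HeT. pose proof (RInt_gamma_kernel_succ a e T ltac:(lra) ltac:(lra)) as H.
  pose proof (RInt_gamma_kernel_le_Gamma (a + 1) e T ltac:(lra) HeT).
  assert (0 <= Rpower e a * exp (- e)) by (left; apply Rmult_lt_0_compat; [apply Rpower_pos|apply exp_pos]).
  replace (1 + a) with (a + 1) by ring. lra.
Qed.

Lemma beta_integral_le_exp_Gamma a c : 0 < a -> 0 < c ->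
  beta_integral a c <= exp (- c) + Rpower c (- a) * Gamma (1 + a).
Proof.
  intros Ha Hc. apply Rle_plus_epsilon. intros eta Heta.
  set (p := Rmin (1 / 2) (Rpower eta (/ a))).
  assert (Hp : 0 < p <= 1 / 2) by (split; [apply Rmin_glb_lt; [lra|apply Rpower_pos]|apply Rmin_l]).
  set (al := Rpower p a).
  assert (Hal : 0 < al < 1) by (split; [apply Rpower_pos|apply Rpower_lt_1; lra]).
  assert (Haleta : al <= eta).
  { rewrite <- (Rpower_Rinv_Rpower eta a Ha Heta).
    apply Rle_Rpower_l; [lra|]. split; [lra|apply Rmin_r]. }
  assert (Hhead : RInt (beta_kernel a c) 0 al <= RInt (fun _ => 1) 0 al).
  { apply RInt_le; [lra|apply ex_RInt_beta_kernel; lra|apply ex_RInt_const|].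
    intros v Hv. apply beta_kernel_bounds; lra. }
  rewrite RInt_const_mult in Hhead.
  assert (Htail : RInt (beta_kernel a c) al 1 <= Rpower c (- a) * (a * RInt (gamma_kernel a) (c * p) c)).
  { rewrite <- RInt_exp_rpow_change_var by lra. fold al.
    apply RInt_le; [lra|apply ex_RInt_beta_kernel; lra| |].
    - apply (@ex_RInt_continuous R_CompleteNormedModule). intros v _.
      apply (continuous_comp (fun v => - c * rpow v (/ a)) exp).
      + apply (@continuous_mult R_UniformSpace R_AbsRing); [apply continuous_const|].
        apply rpow_continuous, Rinv_0_lt_compat, Ha.
      + apply (@ex_derive_continuous R_AbsRing R_NormedModule). auto_derive. auto.
    - intros v Hv. apply beta_kernel_le_exp; lra. }
  pose proof (mul_RInt_gamma_kernel_le a (c * p) c ltac:(lra) ltac:(nra)) as Hg.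
  pose proof (Rpower_pos c (- a)) as Hca.
  apply Rmult_le_compat_l with (r := Rpower c (- a)) in Hg; [|lra].
  assert (Hinv : Rpower c (- a) * Rpower c a = 1)
    by (rewrite Rpower_Ropp; field; apply Rgt_not_eq, Rpower_pos).
  replace (Rpower c (- a) * (Gamma (1 + a) + Rpower c a * exp (- c)))
    with (Rpower c (- a) * Gamma (1 + a) + Rpower c (- a) * Rpower c a * exp (- c)) in Hg by ring.
  rewrite Hinv in Hg.
  unfold beta_integral.
  rewrite <- (RInt_Chasles (beta_kernel a c) 0 al 1) by (apply ex_RInt_beta_kernel; lra).
  change plus with Rplus. lra.
Qed.

(* Equal to [Gamma (1 + a)]; [beta_integral_succ] makes it [1]-periodic in [c]. *)
Definition beta_normalized (a c : R) : R := beta_integral a c * Gamma (1 + a + c) / Gamma (1 + c).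

Lemma beta_normalized_succ a c : 0 < a -> 0 < c -> beta_normalized a (c + 1) = beta_normalized a c.
Proof.
  intros Ha Hc. unfold beta_normalized.
  replace (1 + a + (c + 1)) with (1 + a + c + 1) by ring.
  replace (1 + (c + 1)) with (1 + c + 1) by ring.
  rewrite !Gamma_succ by lra.
  pose proof (beta_integral_succ a c Ha Hc) as H.
  pose proof (Gamma_pos (1 + c) ltac:(lra)).
  apply Rmult_eq_reg_r with ((1 + c) * Gamma (1 + c)); [|nra].
  replace (beta_integral a (c + 1) * ((1 + a + c) * Gamma (1 + a + c)) / ((1 + c) * Gamma (1 + c))
           * ((1 + c) * Gamma (1 + c)))
    with ((a + c + 1) * beta_integral a (c + 1) * Gamma (1 + a + c)) by (field; lra).
  rewrite H. field. lra.
Qed.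

Lemma beta_normalized_plus_INR a b n : 0 < a -> 0 < b ->
  beta_normalized a (b + INR n) = beta_normalized a b.
Proof.
  intros Ha Hb. induction n as [|n IH]; [rewrite Rplus_0_r; reflexivity|].
  rewrite S_INR, <- Rplus_assoc, beta_normalized_succ, IH by (pose proof (pos_INR n); lra).
  reflexivity.
Qed.

Lemma beta_normalized_le a c : 0 < a -> 0 < c ->
  beta_normalized a c
  <= exp (1 + a) * (Rpower (1 + a + c) a * exp (- (1 + a + c))) + Gamma (1 + a) * exp (a * ((1 + a) / c)).
Proof.
  intros Ha Hc. set (d := 1 + a + c).
  pose proof (Gamma_pos (1 + c) ltac:(lra)) as HGc.
  pose proof (Gamma_plus_le_pow (1 + c) a ltac:(lra) ltac:(lra)) as HG.
  replace (1 + c + a) with d in HG by (unfold d; ring).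
  pose proof (beta_integral_le_exp_Gamma a c Ha Hc) as HJ.
  pose proof (beta_integral_nonneg a c Ha Hc) as HJ0.
  pose proof (Rpower_pos d a) as Hda.
  assert (Hratio : Rpower c (- a) * Rpower d a <= exp (a * ((1 + a) / c))).
  { rewrite Rpower_Ropp, <- Rpower_exp.
    replace (/ Rpower c a * Rpower d a) with (Rpower (d / c) a)
      by (rewrite Rpower_div by (unfold d; lra); field; apply Rgt_not_eq, Rpower_pos).
    apply Rle_Rpower_l; [lra|]. split; [apply Rdiv_lt_0_compat; unfold d; lra|].
    pose proof (exp_ineq1_le ((1 + a) / c)).
    replace (d / c) with (1 + (1 + a) / c) by (unfold d; field; lra). lra. }
  assert (Hexp : exp (- c) = exp (1 + a) * exp (- d))
    by (rewrite <- exp_plus; f_equal; unfold d; ring).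
  unfold beta_normalized. fold d.
  apply Rle_trans with ((exp (- c) + Rpower c (- a) * Gamma (1 + a)) * Rpower d a).
  - unfold Rdiv. rewrite Rmult_assoc. apply Rmult_le_compat; [lra| |lra|].
    + apply Rmult_le_pos; left; [apply Gamma_pos; unfold d; lra|apply Rinv_0_lt_compat; lra].
    + apply Rmult_le_reg_r with (Gamma (1 + c)); [lra|].
      rewrite Rmult_assoc, Rinv_l by lra. lra.
  - rewrite Hexp. pose proof (Gamma_pos (1 + a) ltac:(lra)). nra.
Qed.

Lemma beta_normalized_le_Gamma a b : 0 < a -> 0 < b -> beta_normalized a b <= Gamma (1 + a).
Proof.
  intros Ha Hb. apply Rle_plus_epsilon. intros eta Heta.
  set (G := Gamma (1 + a)). assert (HG : 0 < G) by (apply Gamma_pos; lra).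
  pose proof (exp_pos (1 + a)) as He.
  destruct (Rpower_mul_exp_neg_small a (eta / (2 * exp (1 + a))) ltac:(lra)
              ltac:(apply Rdiv_lt_0_compat; lra)) as [M [HM HMb]].
  set (L := ln (1 + eta / (2 * G))).
  assert (HL : 0 < L) by (unfold L; rewrite <- ln_1; apply ln_increasing; [lra|];
                          assert (0 < eta / (2 * G)) by (apply Rdiv_lt_0_compat; lra); lra).
  assert (HaL : 0 <= a * (1 + a) / L) by (apply Rdiv_le_0_compat; nra).
  destruct (INR_unbounded (M + a * (1 + a) / L)) as [n Hn].
  set (c := b + INR n). pose proof (pos_INR n).
  assert (Hc : M <= c /\ a * (1 + a) / L <= c) by (unfold c; lra).
  rewrite <- (beta_normalized_plus_INR a b n Ha Hb). fold c.
  eapply Rle_trans; [apply beta_normalized_le; lra|].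
  pose proof (HMb (1 + a + c) ltac:(lra)) as Hd.
  assert (Hexp : exp (a * ((1 + a) / c)) <= 1 + eta / (2 * G)).
  { rewrite <- (exp_ln (1 + eta / (2 * G)))
      by (assert (0 < eta / (2 * G)) by (apply Rdiv_lt_0_compat; lra); lra).
    apply exp_le_exp. fold L. apply Rmult_le_reg_r with (c / L); [apply Rdiv_lt_0_compat; lra|].
    replace (a * ((1 + a) / c) * (c / L)) with (a * (1 + a) / L) by (field; lra).
    replace (L * (c / L)) with c by (field; lra). lra. }
  apply Rmult_le_compat_l with (r := exp (1 + a)) in Hd; [|lra].
  apply Rmult_le_compat_l with (r := G) in Hexp; [|lra].
  replace (exp (1 + a) * (eta / (2 * exp (1 + a)))) with (eta / 2) in Hd by (field; lra).
  replace (G * (1 + eta / (2 * G))) with (G + eta / 2) in Hexp by (field; lra).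
  fold G. lra.
Qed.

Lemma beta_integral_le a b : 0 < a -> 0 < b ->
  beta_integral a b <= Gamma (1 + a) * Gamma (1 + b) / Gamma (1 + a + b).
Proof.
  intros Ha Hb. pose proof (beta_normalized_le_Gamma a b Ha Hb) as H.
  pose proof (Gamma_pos (1 + b) ltac:(lra)). pose proof (Gamma_pos (1 + a + b) ltac:(lra)).
  unfold beta_normalized in H.
  apply Rmult_le_reg_r with (Gamma (1 + a + b) / Gamma (1 + b)); [apply Rdiv_lt_0_compat; lra|].
  replace (Gamma (1 + a) * Gamma (1 + b) / Gamma (1 + a + b) * (Gamma (1 + a + b) / Gamma (1 + b)))
    with (Gamma (1 + a)) by (field; lra).
  unfold Rdiv in *. rewrite <- Rmult_assoc. exact H.
Qed.

(** * Discrete fractional integrals *)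

Lemma sum_f_R0_by_parts (p q : nat -> R) n :
  sum_f_R0 (fun j => (q j - q (S j)) * p j) n + p (S n) * q (S n)
  = p 0%nat * q 0%nat + sum_f_R0 (fun j => (p (S j) - p j) * q (S j)) n.
Proof. induction n as [|n IH]; [simpl; ring|]. rewrite !tech5, <- Rplus_assoc, <- IH. ring. Qed.

Lemma lower_sum_le_RInt (psi : R -> R) (p : nat -> R) n :
  (forall j, p j <= p (S j)) -> (forall x y, x <= y -> psi y <= psi x) ->
  (forall x y, ex_RInt psi x y) ->
  sum_f_R0 (fun j => (p (S j) - p j) * psi (p (S j))) n <= RInt psi (p 0%nat) (p (S n)).
Proof.
  intros Hp Hpsi Hex.
  assert (Hstep : forall j, (p (S j) - p j) * psi (p (S j)) <= RInt psi (p j) (p (S j))).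
  { intros j. rewrite <- RInt_const_mult. apply RInt_le; [apply Hp|apply ex_RInt_const|apply Hex|].
    intros t Ht. apply Hpsi. lra. }
  induction n as [|n IH]; [apply Hstep|].
  rewrite tech5, <- (RInt_Chasles psi (p 0%nat) (p (S n)) (p (S (S n)))) by apply Hex.
  change plus with Rplus. pose proof (Hstep (S n)). lra.
Qed.

Section Discrete_fractional_integral.

Variables (a b : R) (k : nat).
Hypotheses (Ha : 0 < a) (Hb : 0 < b) (Hk : (1 <= k)%nat).

Let psi (w : R) : R := rpow (INR k - rpow w (/ a)) b.

Let psi_continuous w : continuous psi w.
Proof.
  apply (continuous_comp (fun w => INR k - rpow w (/ a)) (fun z => rpow z b)); [|apply rpow_continuous, Hb].
  apply (@continuous_minus R_UniformSpace R_AbsRing R_NormedModule);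
    [apply continuous_const|apply rpow_continuous, Rinv_0_lt_compat, Ha].
Qed.

Let ex_RInt_psi u v : ex_RInt psi u v.
Proof. apply (@ex_RInt_continuous R_CompleteNormedModule). intros; apply psi_continuous. Qed.

Let RInt_psi : RInt psi 0 (rpow (INR k) a) = rpow (INR k) (a + b) * beta_integral a b.
Proof.
  assert (Hk0 : 0 < INR k) by (apply lt_0_INR; lia).
  set (K := rpow (INR k) a).
  assert (HK : 0 <= K) by apply rpow_nonneg.
  assert (Hsub : RInt psi (K * 0 + 0) (K * 1 + 0)
                 = RInt (fun y => K * rpow (INR k) b * beta_kernel a b y) 0 1).
  { rewrite <- RInt_comp_lin by apply ex_RInt_psi. apply RInt_ext.
    intros y Hy. rewrite Rmin_left, Rmax_right in Hy by lra.
    change scal with Rmult. unfold psi, beta_kernel. rewrite Rplus_0_r.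
    rewrite rpow_mult by lra. unfold K. rewrite rpow_rpow_Rinv by lra.
    pose proof (rpow_le_1 y (/ a) ltac:(apply Rinv_0_lt_compat; lra) ltac:(lra)).
    replace (INR k - INR k * rpow y (/ a)) with (INR k * (1 - rpow y (/ a))) by ring.
    rewrite rpow_mult by lra. match goal with |- ?l = ?r => change (@eq R l r) end. ring. }
  rewrite Rmult_0_r, Rmult_1_r, !Rplus_0_r in Hsub. rewrite Hsub.
  rewrite RInt_mult_l by (apply ex_RInt_beta_kernel; lra).
  unfold beta_integral, K. rewrite !rpow_Rpower, Rpower_plus by lra. reflexivity.
Qed.

Lemma sum_rpow_increment_mul_rpow_le :
  sum_f_R0 (fun j => (rpow (INR k - INR j) b - rpow (INR k - INR (S j)) b) * rpow (INR j) a) (k - 1)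
  <= rpow (INR k) (a + b) * beta_integral a b.
Proof.
  set (p := fun j => rpow (INR j) a). set (q := fun j => rpow (INR k - INR j) b).
  pose proof (sum_f_R0_by_parts p q (k - 1)) as Hparts.
  replace (S (k - 1)) with k in Hparts by lia.
  assert (Hq : q k = 0) by (unfold q; apply rpow_nonpos; lra).
  assert (Hp : p 0%nat = 0) by (unfold p; apply rpow_nonpos; simpl; lra).
  rewrite Hq, Hp, Rmult_0_r, Rmult_0_l, Rplus_0_r, Rplus_0_l in Hparts.
  change (sum_f_R0 (fun j => (q j - q (S j)) * p j) (k - 1) <= rpow (INR k) (a + b) * beta_integral a b).
  rewrite Hparts, <- RInt_psi.
  replace (RInt psi 0 (rpow (INR k) a)) with (RInt psi (p 0%nat) (p (S (k - 1))))
    by (rewrite Hp; unfold p; do 3 f_equal; lia).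
  rewrite (sum_eq _ (fun j => (p (S j) - p j) * psi (p (S j)))).
  - apply lower_sum_le_RInt; [|intros x y Hxy|apply ex_RInt_psi].
    + intros j. apply rpow_le_compat; [lra|]. rewrite S_INR. lra.
    + apply rpow_le_compat; [lra|]. apply Rplus_le_compat_l, Ropp_le_contravar.
      apply rpow_le_compat; [apply Rinv_0_lt_compat|]; lra.
  - intros j _. unfold psi, p, q. rewrite rpow_rpow_Rinv by (try apply pos_INR; lra). reflexivity.
Qed.

End Discrete_fractional_integral.

Lemma sum_f_R0_telescope (q : nat -> R) n : sum_f_R0 (fun j => q j - q (S j)) n = q 0%nat - q (S n).
Proof. induction n as [|n IH]; [reflexivity|]. rewrite tech5, IH. ring. Qed.

Lemma rho_le_rpow_sub b k j : 0 < b <= 1 -> (j < k)%nat ->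
  rho b (k - j) <= (rpow (INR k - INR j) b - rpow (INR k - INR (S j)) b) / Gamma (1 + b).
Proof.
  intros Hb Hj. pose proof (rho_le_increment b (k - j) Hb ltac:(lia)) as H.
  rewrite minus_INR in H by lia. rewrite S_INR.
  replace (INR k - (INR j + 1)) with (INR k - INR j - 1) by ring. exact H.
Qed.

Lemma sum_rho_le b k : 0 < b <= 1 -> (1 <= k)%nat ->
  sum_f_R0 (fun j => rho b (k - j)) (k - 1) <= rpow (INR k) b / Gamma (1 + b).
Proof.
  intros Hb Hk.
  eapply Rle_trans.
  { apply sum_Rle with (An := fun j => rho b (k - j))
      (Bn := fun j => (rpow (INR k - INR j) b - rpow (INR k - INR (S j)) b) / Gamma (1 + b)).
    intros j Hj. apply rho_le_rpow_sub; [exact Hb|lia]. }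
  right. unfold Rdiv. rewrite <- scal_sum, sum_f_R0_telescope.
  replace (S (k - 1)) with k by lia.
  rewrite Rminus_0_r, Rminus_diag, (rpow_nonpos 0) by lra. ring.
Qed.

Lemma sum_rho_mul_rpow_le b k a : 0 < b <= 1 -> 0 < a -> (1 <= k)%nat ->
  sum_f_R0 (fun j => rho b (k - j) * rpow (INR j) a) (k - 1)
  <= Gamma (1 + a) / Gamma (1 + a + b) * rpow (INR k) (a + b).
Proof.
  intros Hb Ha Hk.
  pose proof (Gamma_pos (1 + b) ltac:(lra)) as HGb.
  pose proof (Gamma_pos (1 + a + b) ltac:(lra)) as HGab.
  eapply Rle_trans.
  { apply sum_Rle with (An := fun j => rho b (k - j) * rpow (INR j) a)
      (Bn := fun j => (rpow (INR k - INR j) b - rpow (INR k - INR (S j)) b) * rpow (INR j) a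
                      * / Gamma (1 + b)).
    intros j Hj. rewrite Rmult_assoc, (Rmult_comm (rpow _ a)), <- Rmult_assoc.
    apply Rmult_le_compat_r; [apply rpow_nonneg|]. apply rho_le_rpow_sub; [exact Hb|lia]. }
  rewrite <- scal_sum.
  pose proof (sum_rpow_increment_mul_rpow_le a b k Ha ltac:(lra) Hk) as HS.
  pose proof (beta_integral_le a b Ha ltac:(lra)) as HJ.
  pose proof (rpow_nonneg (INR k) (a + b)).
  apply Rle_trans with (/ Gamma (1 + b) * (rpow (INR k) (a + b) * beta_integral a b)).
  - apply Rmult_le_compat_l; [left; apply Rinv_0_lt_compat, HGb|exact HS].
  - apply Rle_trans with (/ Gamma (1 + b)
      * (rpow (INR k) (a + b) * (Gamma (1 + a) * Gamma (1 + b) / Gamma (1 + a + b)))).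
    + apply Rmult_le_compat_l; [left; apply Rinv_0_lt_compat, HGb|]. apply Rmult_le_compat_l; lra.
    + right. field. lra.
Qed.

Lemma sum_rho_mul_pow_le b k l : 0 < b <= 1 -> (1 <= k)%nat ->
  sum_f_R0 (fun j => rho b (k - j) * (rpow (INR j) b ^ l / Gamma (1 + INR l * b))) (k - 1)
  <= rpow (INR k) b ^ S l / Gamma (1 + INR (S l) * b).
Proof.
  intros Hb Hk. destruct l as [|l].
  - simpl INR. rewrite Rmult_0_l, Rplus_0_r, Gamma_1, Rmult_1_l, pow_1.
    rewrite (sum_eq _ (fun j => rho b (k - j))) by (intros; simpl; field).
    apply sum_rho_le; assumption.
  - set (a := INR (S l) * b).
    assert (Ha : 0 < a) by (unfold a; apply Rmult_lt_0_compat; [apply lt_0_INR; lia|lra]).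
    pose proof (Gamma_pos (1 + a) ltac:(lra)) as HGa.
    rewrite (sum_eq _ (fun j => rho b (k - j) * rpow (INR j) a * / Gamma (1 + a)))
      by (intros j _; rewrite rpow_pow by lia; unfold a, Rdiv; ring).
    rewrite <- scal_sum, rpow_pow, (S_INR (S l)) by lia.
    replace ((INR (S l) + 1) * b) with (a + b) by (unfold a; ring).
    replace (1 + (a + b)) with (1 + a + b) by ring.
    eapply Rle_trans; [apply Rmult_le_compat_l; [left; apply Rinv_0_lt_compat, HGa|];
                       apply sum_rho_mul_rpow_le; assumption|].
    right. field. split; apply Rgt_not_eq, Gamma_pos; lra.
Qed.

(** * The Mittag-Leffler series *)

Lemma ex_series_ratio_le_half (u : nat -> R) N : (forall n, 0 <= u n) ->
  (forall n, (N <= n)%nat -> u (S n) <= u n / 2) -> ex_series u.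
Proof.
  intros Hpos Hr.
  assert (Hgeom : forall n, u (N + n)%nat <= u N * (/ 2) ^ n).
  { induction n as [|n IH]; [rewrite Nat.add_0_r; simpl; lra|].
    replace (N + S n)%nat with (S (N + n)) by lia.
    eapply Rle_trans; [apply Hr; lia|]. simpl. lra. }
  apply (proj2 (ex_series_incr_n u N)).
  apply (@ex_series_le R_AbsRing R_CompleteNormedModule _ (fun n => u N * (/ 2) ^ n)).
  - intros n. change (Rabs (u (N + n)%nat) <= u N * (/ 2) ^ n).
    rewrite Rabs_pos_eq by apply Hpos. apply Hgeom.
  - apply (@ex_series_scal_l R_AbsRing R_NormedModule), ex_series_geom.
    rewrite Rabs_pos_eq; lra.
Qed.

Lemma Rpower_mul_Gamma_le x s : 1 <= x -> 0 <= s <= 1 -> Rpower (x + s) s * Gamma x <= 2 * Gamma (x + s).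
Proof.
  intros Hx Hs. pose proof (Gamma_plus_ge x s Hx Hs) as W.
  pose proof (Gamma_pos x Hx). pose proof (Gamma_pos (x + s) ltac:(lra)).
  pose proof (Rpower_pos (x + s) s) as Hps.
  apply Rmult_le_compat_l with (r := Rpower (x + s) s) in W; [|lra].
  replace (Rpower (x + s) s * (Rpower (x + s) (1 - s) * Gamma (x + s))) with ((x + s) * Gamma (x + s)) in W
    by (rewrite <- Rmult_assoc, <- Rpower_plus, Rplus_minus, Rpower_1 by lra; reflexivity).
  nra.
Qed.

Lemma ex_series_mittag_leffler b z : 0 < b <= 1 -> 0 <= z ->
  ex_series (fun l => z ^ l / Gamma (1 + INR l * b)).
Proof.
  intros Hb Hz.
  assert (HG : forall l, 0 < Gamma (1 + INR l * b)) by (intros; apply Gamma_pos; pose proof (pos_INR l); nra).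
  destruct (INR_unbounded (Rpower (4 * z + 1) (/ b) / b)) as [N HN].
  apply (ex_series_ratio_le_half _ N).
  - intros n. apply Rdiv_le_0_compat; [apply pow_le, Hz|apply HG].
  - intros n Hn. set (x := 1 + INR n * b).
    assert (Hx : 1 <= x) by (unfold x; pose proof (pos_INR n); nra).
    replace (1 + INR (S n) * b) with (x + b) by (unfold x; rewrite S_INR; ring).
    assert (Hlarge : 4 * z <= Rpower (x + b) b).
    { assert (Rpower (4 * z + 1) (/ b) <= x + b).
      { assert (HNb : Rpower (4 * z + 1) (/ b) <= INR N * b).
        { apply Rmult_le_reg_r with (/ b); [apply Rinv_0_lt_compat; lra|].
          rewrite Rmult_assoc, Rinv_r, Rmult_1_r by lra. unfold Rdiv in HN. lra. }
        apply le_INR in Hn. unfold x. nra. }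
      apply Rle_trans with (Rpower (Rpower (4 * z + 1) (/ b)) b);
        [rewrite Rpower_Rinv_Rpower by lra; lra|].
      apply Rle_Rpower_l; [lra|split; [apply Rpower_pos|exact H]]. }
    pose proof (Rpower_mul_Gamma_le x b Hx ltac:(lra)) as HW.
    pose proof (HG n) as HGn. fold x in HGn.
    assert (HGxb : 0 < Gamma (x + b)) by (apply Gamma_pos; lra).
    pose proof (pow_le z n Hz).
    apply Rmult_le_reg_r with (2 * Gamma x * Gamma (x + b)); [nra|].
    replace (z ^ S n / Gamma (x + b) * (2 * Gamma x * Gamma (x + b))) with (2 * z * z ^ n * Gamma x)
      by (simpl; field; lra).
    replace (z ^ n / Gamma x / 2 * (2 * Gamma x * Gamma (x + b))) with (z ^ n * Gamma (x + b))
      by (field; lra).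
    assert (2 * z * Gamma x <= Gamma (x + b)) by nra.
    replace (2 * z * z ^ n * Gamma x) with (z ^ n * (2 * z * Gamma x)) by ring.
    apply Rmult_le_compat_l; assumption.
Qed.

Lemma is_series_sum_f_R0 (A : nat -> nat -> R) N : (forall j, ex_series (A j)) ->
  is_series (fun l => sum_f_R0 (fun j => A j l) N) (sum_f_R0 (fun j => Series (A j)) N).
Proof.
  intros H. induction N as [|N IH]; simpl; [apply Series_correct, H|].
  apply (is_series_plus _ (A (S N))); [exact IH|apply Series_correct, H].
Qed.

Lemma mittag_leffler_sub_1 b z : 0 < b <= 1 -> 0 <= z ->
  mittag_leffler b z - 1 = Series (fun l => z ^ S l / Gamma (1 + INR (S l) * b)).
Proof.
  intros Hb Hz. unfold mittag_leffler.
  rewrite Series_incr_1 by (apply ex_series_mittag_leffler; assumption).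
  simpl INR at 1. rewrite Rmult_0_l, Rplus_0_r, Gamma_1. simpl. field.
Qed.

Lemma mittag_leffler_convolution_le b x k : 0 < b <= 1 -> 0 <= x -> (1 <= k)%nat ->
  x * sum_f_R0 (fun j => rho b (k - j) * mittag_leffler b (x * rpow (INR j) b)) (k - 1)
  <= mittag_leffler b (x * rpow (INR k) b) - 1.
Proof.
  intros Hb Hx Hk.
  set (A := fun j l => rho b (k - j) * (rpow (INR j) b ^ l / Gamma (1 + INR l * b)) * x ^ S l).
  assert (HA : forall j, Series (A j) = x * (rho b (k - j) * mittag_leffler b (x * rpow (INR j) b))).
  { intros j. unfold mittag_leffler. rewrite <- !Series_scal_l. apply Series_ext. intros l.
    unfold A. rewrite Rpow_mult_distr. simpl. unfold Rdiv. ring. }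
  assert (HexA : forall j, ex_series (A j)).
  { intros j.
    apply (ex_series_ext
      (fun l => x * (rho b (k - j) * ((x * rpow (INR j) b) ^ l / Gamma (1 + INR l * b))))).
    - intros l. unfold A. rewrite Rpow_mult_distr. simpl. unfold Rdiv. ring.
    - apply (@ex_series_scal_l R_AbsRing R_NormedModule), (@ex_series_scal_l R_AbsRing R_NormedModule).
      apply ex_series_mittag_leffler; [exact Hb|]. apply Rmult_le_pos; [exact Hx|apply rpow_nonneg]. }
  rewrite scal_sum, (sum_eq _ (fun j => Series (A j))) by (intros j _; rewrite HA; ring).
  rewrite <- (is_series_unique _ _ (is_series_sum_f_R0 A (k - 1) HexA)).
  rewrite mittag_leffler_sub_1 by (try apply Rmult_le_pos; try apply rpow_nonneg; assumption).
  apply Series_le.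
  - intros l. split.
    + apply cond_pos_sum. intros j. unfold A. apply Rmult_le_pos; [|apply pow_le, Hx].
      apply Rmult_le_pos; [apply rho_nonneg; lra|].
      apply Rdiv_le_0_compat; [apply pow_le, rpow_nonneg|apply Gamma_pos; pose proof (pos_INR l); nra].
    + unfold A. rewrite <- scal_sum, Rpow_mult_distr. unfold Rdiv. rewrite Rmult_assoc.
      apply Rmult_le_compat_l; [apply pow_le, Hx|]. apply sum_rho_mul_pow_le; assumption.
  - apply (ex_series_incr_1 (fun l => (x * rpow (INR k) b) ^ l / Gamma (1 + INR l * b))).
    apply ex_series_mittag_leffler; [exact Hb|]. apply Rmult_le_pos; [exact Hx|apply rpow_nonneg].
Qed.

Theorem lemma2p3 (beta T mu : R) (nT : nat)
  (hb0 : 0 < beta) (hb1 : beta < 1) (hT : 0 < T) (hnT : (1 <= nT)%nat)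
  (hmu : 0 < mu) :
  let tau := T / INR nT in
  let t := fun k : nat => INR k * tau in
  let P := fun j : nat => rpow tau beta * rho beta j in
  forall k : nat, (1 <= k <= nT)%nat ->
    mu * sum_f_R0 (fun j => P (k - j)%nat * mittag_leffler beta (mu * rpow (t j) beta)) (k - 1)
    <= mittag_leffler beta (mu * rpow (t k) beta) - 1.
Proof.
  intros tau t P k Hk.
  assert (Htau : 0 < tau) by (apply Rdiv_lt_0_compat; [lra|apply lt_0_INR; lia]).
  set (x := mu * rpow tau beta).
  assert (Hx : 0 <= x) by (apply Rmult_le_pos; [lra|apply rpow_nonneg]).
  assert (Ht : forall j, mu * rpow (t j) beta = x * rpow (INR j) beta).
  { intros j. unfold t, x. rewrite rpow_mult by (try apply pos_INR; lra). ring. }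
  rewrite Ht, scal_sum.
  rewrite (sum_eq _ (fun j => rho beta (k - j) * mittag_leffler beta (x * rpow (INR j) beta) * x))
    by (intros j _; unfold P; rewrite Ht; unfold x; ring).
  rewrite <- scal_sum.
  apply mittag_leffler_convolution_le; [lra|exact Hx|lia].
Qed.
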